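(* Suppose $\mathcal M$ is unichain and indexable, and $\widehat{\mathcal M}$ has the same rewards and the same support as $\mathcal M$ and satisfies Assumption (A). There exists a constant $c_\alpha>0$ depending only on $\mathcal M$ such that for every state $s\in\mathcal S$ and every policy $\pi\subseteq\mathcal S$, $$|\alpha^\pi_s-\hat\alpha^\pi_s|\le c_\alpha\|\mathcal M-\widehat{\mathcal M}\|_\infty,$$ where $\alpha^\pi_s$ and $\hat\alpha^\pi_s$ are the activation advantages of $s$ under $\pi$ in $\mathcal M$ and $\widehat{\mathcal M}$ respectively. (One may take $c_\alpha=\max_\pi\{\mathrm{sp}(b^\pi)+8D(P^\pi)\mathrm{sp}(b^\pi)+\tfrac12\mathrm{sp}(b^{\pi,1})\}$, where $b^{\pi,1}$ solves $b^{\pi,1}=b^\pi+P^\pi b^{\pi,1}$.)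
   Context: Setting. An MDP is $\mathcal M=(\mathcal S,\{0,1\},(P^a)_a,(r^a)_a)$, finite $\mathcal S$, row-stochastic $P^0,P^1$, rewards $r^0,r^1\in\mathbb R^{\mathcal S}$. A policy is a subset $\pi\subseteq\mathcal S$ of states where action 1 is played, inducing $P^\pi$, $r^\pi$; $\mathcal M$ is unichain if every $P^\pi$ has a single recurrent class. For a unichain policy, gain $g^\pi$ and bias $b^\pi$ (up to an additive constant) solve $g^\pi\mathbf 1+b^\pi=r^\pi+P^\pi b^\pi$; the activation advantage is $\alpha^\pi_s=r^1_s-r^0_s+(P^1_{s,\cdot}-P^0_{s,\cdot})\cdot b^\pi$. For $\lambda\in\mathbb R$, $\mathcal M(\lambda)$ has the same transitions and rewards $r^1-\lambda\mathbf 1$, $r^0$, with advantages $\alpha^\pi_s(\lambda)$ defined likewise (including the term $-\lambda$). BO (bias optimal) policy in $\mathcal M(\lambda)$: gain optimal and bias-maximal among gain-optimal policies; for unichain MDPs, $\pi$ is BO iff $\alpha^\pi_s(\lambda)\ge0$ for $s\in\pi$, $\le0$ for $s\notin\pi$. $\alpha^*_s(\lambda)$ is $\alpha^\pi_s(\lambda)$ for any BO $\pi$. $\mathcal M$ indexable: for each $s$ there is $\lambda_s$ (Whittle index) with $\alpha^*_s(\lambda)>0$ for $\lambda<\lambda_s$ and $<0$ for $\lambda>\lambda_s$. Hats denote objects in $\widehat{\mathcal M}=(\mathcal S,\{0,1\},(\hat P^a)_a,(r^a)_a)$. $\|A\|_\infty=\max_s\sum_{s'}|A_{s,s'}|$;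 $\|\mathcal M-\widehat{\mathcal M}\|_\infty=\max_a\|P^a-\hat P^a\|_\infty$. Same support: $P^a_{s,s'}>0\iff\hat P^a_{s,s'}>0$. $\mathrm{sp}(v)=\max v-\min v$. Diameter of unichain $P$ with recurrent class $\mathcal S_r$: $D(P)=\max_{s\in\mathcal S,s'\in\mathcal S_r}\mathbb E^P[\tau_{s,s'}]$. Assumption (A): $\|\mathcal M-\widehat{\mathcal M}\|_\infty\le\min\{1/\max_\pi D(P^\pi),\ \tfrac12\min\{|\lambda_s-\lambda_{s'}|:\lambda_s\ne\lambda_{s'}\}\}$. *)

From HB Require Import structures.
From mathcomp Require Import all_boot all_order all_algebra.
From mathcomp Require Import all_classical all_reals all_analysis.
Set Implicit Arguments. Unset Strict Implicit. Unset Printing Implicit Defensive.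
Import Order.TTheory GRing.Theory Num.Theory.
Local Open Scope ring_scope.

(* Two-action MDP on the state space 'I_n; action 1 = "active", 0 = "passive".
   A policy is a set pi of states where action 1 is played. *)

Section MDP.
Variables (R : realType) (n : nat).

Definition stochastic (P : 'M[R]_n) : Prop :=
  (forall i j, 0 <= P i j) /\ (forall i, \sum_j P i j = 1).

Definition Ppol (P0 P1 : 'M[R]_n) (pi : {set 'I_n}) : 'M[R]_n :=
  \matrix_(i, j) (if i \in pi then P1 i j else P0 i j).
Definition rpol (r0 r1 : 'I_n -> R) (pi : {set 'I_n}) : 'I_n -> R :=
  fun i => if i \in pi then r1 i else r0 i.

Definition acc (P : 'M[R]_n) : rel 'I_n := fun i j => 0 < P i j.
Definition recurrent (P : 'M[R]_n) (i : 'I_n) : bool :=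
  [forall j, connect (acc P) i j ==> connect (acc P) j i].
Definition unichain (P : 'M[R]_n) : Prop :=
  forall i j, recurrent P i -> recurrent P j -> connect (acc P) i j.
Definition mdp_unichain (P0 P1 : 'M[R]_n) : Prop :=
  forall pi : {set 'I_n}, unichain (Ppol P0 P1 pi).

Definition same_support (P Ph : 'M[R]_n) : Prop :=
  forall i j, (0 < P i j) <-> (0 < Ph i j).

Definition gain_bias (P0 P1 : 'M[R]_n) (r0 r1 : 'I_n -> R) (pi : {set 'I_n})
  (g : R) (b : 'I_n -> R) : Prop :=
  forall s, g + b s = rpol r0 r1 pi s + \sum_j Ppol P0 P1 pi s j * b j.

Definition stationary (P : 'M[R]_n) (mu : 'I_n -> R) : Prop :=
  [/\ forall i, 0 <= mu i, \sum_i mu i = 1 & forall j, \sum_i mu i * P i j = mu j].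

(* the bias proper: the solution normalised by  P^* b = 0  (mu . b = 0) *)
Definition gain_bias_norm (P0 P1 : 'M[R]_n) (r0 r1 : 'I_n -> R)
  (pi : {set 'I_n}) (g : R) (b : 'I_n -> R) : Prop :=
  gain_bias P0 P1 r0 r1 pi g b /\
  exists mu, stationary (Ppol P0 P1 pi) mu /\ \sum_i mu i * b i = 0.

Definition BO (P0 P1 : 'M[R]_n) (r0 r1 : 'I_n -> R) (pi : {set 'I_n}) : Prop :=
  exists g b, gain_bias_norm P0 P1 r0 r1 pi g b /\
  forall (pi' : {set 'I_n}) g' b', gain_bias_norm P0 P1 r0 r1 pi' g' b' ->
    g' <= g /\ (g' = g -> forall s, b' s <= b s).

Definition advantage (P0 P1 : 'M[R]_n) (r0 r1 : 'I_n -> R) (b : 'I_n -> R)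
  (s : 'I_n) : R :=
  r1 s - r0 s + \sum_j (P1 s j - P0 s j) * b j.

Definition rlam (r1 : 'I_n -> R) (lam : R) : 'I_n -> R := fun s => r1 s - lam.

Definition whittle_index (P0 P1 : 'M[R]_n) (r0 r1 : 'I_n -> R) (s : 'I_n)
  (lam_s : R) : Prop :=
  forall lam : R,
    (lam < lam_s -> forall pi g b, BO P0 P1 r0 (rlam r1 lam) pi ->
        gain_bias P0 P1 r0 (rlam r1 lam) pi g b ->
        0 < advantage P0 P1 r0 (rlam r1 lam) b s) /\
    (lam_s < lam -> forall pi g b, BO P0 P1 r0 (rlam r1 lam) pi ->
        gain_bias P0 P1 r0 (rlam r1 lam) pi g b ->
        advantage P0 P1 r0 (rlam r1 lam) b s < 0).

Definition mnorm (A : 'M[R]_n) : R := \big[Num.max/0]_i \sum_j `|A i j|.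
Definition model_dist (P0 P1 P0h P1h : 'M[R]_n) : R :=
  Num.max (mnorm (P0 - P0h)) (mnorm (P1 - P1h)).

(* surv P s' t i = P_i(tau_{s'} > t), tau_{s'} = min {t >= 1 : X_t = s'} *)
Fixpoint surv (P : 'M[R]_n) (s' : 'I_n) (t : nat) : 'I_n -> R :=
  match t with
  | 0 => fun _ => 1
  | t.+1 => fun i => \sum_(j | j != s') P i j * surv P s' t j
  end.

(* E_s[tau_{s'}] = sum_{t >= 0} P_s(tau_{s'} > t) *)
Definition expected_hit (P : 'M[R]_n) (s s' : 'I_n) : R :=
  limn (fun N => \sum_(0 <= t < N) surv P s' t s).

Definition diameter (P : 'M[R]_n) : R :=
  \big[Num.max/0]_s \big[Num.max/0]_(s' | recurrent P s') expected_hit P s s'.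

Definition max_diameter (P0 P1 : 'M[R]_n) : R :=
  \big[Num.max/0]_(pi : {set 'I_n}) diameter (Ppol P0 P1 pi).

(* Assumption (A); the min over distinct index pairs (empty min = +oo) is
   expressed pairwise *)
Definition assumptionA (P0 P1 P0h P1h : 'M[R]_n) (lam : 'I_n -> R) : Prop :=
  model_dist P0 P1 P0h P1h <= 1 / max_diameter P0 P1 /\
  (forall s s', lam s != lam s' -> model_dist P0 P1 P0h P1h <= `|lam s - lam s'| / 2).

End MDP.

From HB Require Import structures.
From mathcomp Require Import all_boot all_order all_algebra.
From mathcomp Require Import all_classical all_reals all_analysis.
From mathcomp Require Import lra ring.
Import Order.TTheory GRing.Theory Num.Theory.
Local Open Scope ring_scope.
Set Implicit Arguments. Unset Strict Implicit.

(* Fix a policy, a recurrent state s' of P = P^pi, the distance eps between the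
   models and the maximal diameter D.  The bias of a unichain policy is unique
   up to an additive constant, so b - b s' is bounded by a constant B of the
   policy.  The difference d = bh - b solves d = (gh - g) + Ph d + e with
   |e| <= eps B, so the maximum principle gives |gh - g| <= eps B, and
   u = d - d s' solves the taboo equation u = f + Q u, with Q = Ph killed at s'
   and |f| <= 2 eps B.  Unrolling this equation until s' is hit bounds |u| by a
   multiple of eps B times the expected hitting time of s' under Ph, and since
   eps D <= 1 by Assumption (A), a supersolution built from the hitting times
   under P keeps the latter below 3 D.  The advantages then differ by at most
   2 eps B + 2 sup |u|. *)

Section FiniteSums.
Variables (R : realType) (I : finType).

Lemma exists_argmax (i0 : I) (x : I -> R) : exists i, forall j, x j <= x i.
Proof. by case: (@arg_maxP _ _ _ i0 predT x) => // i _ H; exists i => j; apply: H. Qed.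

Lemma exists_argmin (i0 : I) (x : I -> R) : exists i, forall j, x i <= x j.
Proof. by case: (@arg_minP _ _ _ i0 predT x) => // i _ H; exists i => j; apply: H. Qed.

Lemma norm_sum_mul_le (a x : I -> R) (eps B : R) : 0 <= B ->
  \sum_j `|a j| <= eps -> (forall j, `|x j| <= B) -> `|\sum_j a j * x j| <= eps * B.
Proof.
move=> B0 ha hx; apply: le_trans (ler_norm_sum _ _ _) _.
apply: le_trans (_ : \sum_j `|a j| * B <= _).
  by apply: ler_sum => j _; rewrite normrM ler_wpM2l.
by rewrite -mulr_suml ler_wpM2r.
Qed.

(* Centring w at W / 2 does not change the sum and halves the bound. *)
Lemma sum_zero_mul_le (a w : I -> R) (eps W : R) : 0 <= W ->
  \sum_j a j = 0 -> \sum_j `|a j| <= eps -> (forall j, 0 <= w j <= W) ->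
  \sum_j a j * w j <= eps * W / 2.
Proof.
move=> W0 a0 ha hw.
have -> : \sum_j a j * w j = \sum_j a j * (w j - W / 2).
  under [RHS]eq_bigr do rewrite mulrBr.
  by rewrite sumrB -mulr_suml a0 mul0r subr0.
rewrite -mulrA; apply: le_trans (ler_norm _) _.
apply: norm_sum_mul_le; rewrite ?divr_ge0 // => j.
by case/andP: (hw j) => h1 h2; rewrite ler_norml; apply/andP; split; lra.
Qed.

End FiniteSums.

Section StochasticMatrix.
Variables (R : realType) (n : nat) (P : 'M[R]_n).
Hypothesis sP : stochastic P.

Lemma stochastic_ge0 i j : 0 <= P i j.
Proof. by case: sP. Qed.

Lemma stochastic_mulr_sum_const i (c : R) : \sum_j P i j * c = c.
Proof. by case: sP => _ h; rewrite -mulr_suml h mul1r. Qed.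

Lemma stochastic_avg_le i (x : 'I_n -> R) c :
  (forall k, x k <= c) -> \sum_k P i k * x k <= c.
Proof.
move=> hx; rewrite -(stochastic_mulr_sum_const i c).
by apply: ler_sum => k _; rewrite ler_wpM2l ?stochastic_ge0.
Qed.

Lemma stochastic_avg_ge i (x : 'I_n -> R) c :
  (forall k, c <= x k) -> c <= \sum_k P i k * x k.
Proof.
move=> hx; rewrite -(stochastic_mulr_sum_const i c).
by apply: ler_sum => k _; rewrite ler_wpM2l ?stochastic_ge0.
Qed.

Lemma stochastic_row_pos i : exists j, 0 < P i j.
Proof.
apply: contrapT => nopos; case: sP => P0 P1; move: (P1 i).
rewrite big1 => [/esym/eqP|j _]; first by rewrite oner_eq0.
apply/eqP; rewrite eq_le P0 andbT leNgt; apply/negP => pj; apply: nopos.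
by exists j.
Qed.

Lemma harmonic_max_step (x : 'I_n -> R) i j :
  x i = \sum_k P i k * x k -> (forall k, x k <= x i) -> 0 < P i j -> x j = x i.
Proof.
move=> hi hmax pij.
have sum0 : \sum_k P i k * (x i - x k) = 0.
  under eq_bigr do rewrite mulrBr.
  by rewrite sumrB stochastic_mulr_sum_const -hi subrr.
have term_ge0 k : true -> 0 <= P i k * (x i - x k).
  by rewrite mulr_ge0 ?stochastic_ge0 ?subr_ge0.
move/eqP: (@psumr_eq0P _ _ _ _ term_ge0 sum0 j isT).
by rewrite mulf_eq0 (gt_eqF pij) subr_eq0 => /eqP ->.
Qed.

Lemma harmonic_max_connect (x : 'I_n -> R) i j :
  (forall k, x k = \sum_l P k l * x l) -> (forall k, x k <= x i) ->
  connect (acc P) i j -> x j = x i.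
Proof.
move=> hx hmax /connectP [p pth ->].
elim: p i pth hmax => //= a p IH i /andP [ia pth] hmax.
have ea : x a = x i := harmonic_max_step (hx i) hmax ia.
by rewrite (IH a pth) // => k; rewrite ea.
Qed.

(* A state of minimal reachable set is recurrent. *)
Lemma exists_recurrent_connect i : exists2 r, recurrent P r & connect (acc P) i r.
Proof.
case: (@arg_minnP _ i (connect (acc P) i)
   (fun j => #|[set k | connect (acc P) j k]|)) => // j ij jmin.
exists j => //; apply/forallP => k; apply/implyP => jk.
have sub : [set l | connect (acc P) k l] \subset [set l | connect (acc P) j l].
  by apply/fintype.subsetP => l; rewrite !inE; apply: connect_trans.
have : [set l | connect (acc P) j l] \subset [set l | connect (acc P) k l].
  rewrite -(subset_leqif_card sub).2 eqn_leq (subset_leq_card sub).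
  exact: jmin (connect_trans ij jk).
by move/fintype.subsetP/(_ j); rewrite !inE connect0 => /(_ isT).
Qed.

Hypothesis uP : unichain P.

Lemma unichain_connect_recurrent r : recurrent P r -> forall i, connect (acc P) i r.
Proof.
move=> rr i; have [r' rr' ir'] := exists_recurrent_connect i.
exact: connect_trans ir' (uP rr' rr).
Qed.

Lemma unichain_harmonic_const (x : 'I_n -> R) :
  (forall k, x k = \sum_l P k l * x l) -> forall j s, x j = x s.
Proof.
move=> hx j s.
have [imax Hmax] := exists_argmax j x.
have [imin Hmin] := exists_argmin j x.
have [r1 rec1 c1] := exists_recurrent_connect imax.
have [r2 rec2 c2] := exists_recurrent_connect imin.
have e1 : x r1 = x imax := harmonic_max_connect hx Hmax c1.
have e2 : x r2 = x imax.
  by rewrite -e1; apply: harmonic_max_connect hx _ (uP rec1 rec2) => k; rewrite e1.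
have e3 : - x r2 = - x imin.
  apply: (@harmonic_max_connect (fun k => - x k)) c2 => k.
    by rewrite hx -sumrN; apply: eq_bigr => l _; rewrite mulrN.
  by rewrite lerN2.
by have := Hmin j; have := Hmax j; have := Hmin s; have := Hmax s; lra.
Qed.

Lemma poisson_gain_bound (i0 : 'I_n) (c delta : R) (x e : 'I_n -> R) :
  (forall i, c + x i = \sum_k P i k * x k + e i) -> (forall i, `|e i| <= delta) ->
  `|c| <= delta.
Proof.
move=> hx he.
have [imax Hmax] := exists_argmax i0 x.
have [imin Hmin] := exists_argmin i0 x.
have h1 := stochastic_avg_le imax Hmax; have h2 := stochastic_avg_ge imin Hmin.
have h3 := hx imax; have h4 := hx imin.
move: (he imax) (he imin); rewrite !ler_norml => /andP [e1 e2] /andP [e3 e4].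
by apply/andP; split; lra.
Qed.

Lemma poisson_bias_unique (r : 'I_n -> R) g b g' b' :
  (forall i, g + b i = r i + \sum_j P i j * b j) ->
  (forall i, g' + b' i = r i + \sum_j P i j * b' j) ->
  forall j s, b j - b' j = b s - b' s.
Proof.
move=> hb hb' j.
pose x i := b i - b' i.
have hx i : (g - g') + x i = \sum_k P i k * x k + 0.
  rewrite addr0 /x; under eq_bigr do rewrite mulrBr.
  by rewrite sumrB; have := hb i; have := hb' i; lra.
have /eqP gg : g - g' == 0.
  by rewrite -normr_le0; apply: (poisson_gain_bound (e := fun=> 0) j hx) => i; rewrite normr0.
apply: (unichain_harmonic_const (x := x)) => k.
by have := hx k; rewrite gg add0r addr0.
Qed.

End StochasticMatrix.

Section HittingTimes.
Variables (R : realType) (n : nat) (P : 'M[R]_n) (s' : 'I_n).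
Hypothesis sP : stochastic P.

Definition hit_psum (N : nat) (i : 'I_n) : R := \sum_(0 <= t < N) surv P s' t i.

Lemma survS t i : surv P s' t.+1 i = \sum_(j | j != s') P i j * surv P s' t j.
Proof. by []. Qed.

Lemma taboo_mass i : \sum_(k | k != s') P i k = 1 - P i s'.
Proof. by case: sP => _ P1; move: (P1 i); rewrite (bigD1 s') //=; lra. Qed.

Lemma taboo_avg_le i (w : 'I_n -> R) :
  (forall k, w k <= 1) -> \sum_(k | k != s') P i k * w k <= 1 - P i s'.
Proof.
move=> hw; rewrite -taboo_mass; apply: ler_sum => k _.
by rewrite -[leRHS]mulr1 ler_wpM2l ?stochastic_ge0.
Qed.

Lemma taboo_avg_lt i j (w : 'I_n -> R) : (forall k, w k <= 1) ->
  0 < P i j -> j != s' -> w j < 1 -> \sum_(k | k != s') P i k * w k < 1 - P i s'.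
Proof.
move=> hw pij js wj; rewrite -taboo_mass -subr_gt0 -sumrB.
under eq_bigr do rewrite -[X in X - _]mulr1 -mulrBr.
rewrite (bigD1 j) //= ltr_pwDl ?mulr_gt0 ?subr_gt0 //.
by apply: sumr_ge0 => k _; rewrite mulr_ge0 ?stochastic_ge0 ?subr_ge0.
Qed.

Lemma surv_ge0 t i : 0 <= surv P s' t i.
Proof.
elim: t i => [|t IH] i; first exact: ler01.
by rewrite survS; apply: sumr_ge0 => j _; rewrite mulr_ge0 ?stochastic_ge0.
Qed.

Lemma surv_le1 t i : surv P s' t i <= 1.
Proof.
elim: t i => [|t IH] i //; rewrite survS.
by apply: le_trans (taboo_avg_le i IH) _; rewrite gerBl stochastic_ge0.
Qed.

Lemma surv_nonincreasing t u i : (t <= u)%N -> surv P s' u i <= surv P s' t i.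
Proof.
have step m j : surv P s' m.+1 j <= surv P s' m j.
  elim: m j => [|m IH] j; first exact: surv_le1.
  by rewrite survS [leRHS]survS; apply: ler_sum => k _; rewrite ler_wpM2l ?stochastic_ge0.
move/subnK <-; elim: (u - t)%N => [|k IH] //; rewrite addSn.
exact: le_trans (step _ _) IH.
Qed.

Lemma surv_lt1_step t i j :
  0 < P i j -> j = s' \/ surv P s' t j < 1 -> surv P s' t.+1 i < 1.
Proof.
move=> pij hj; rewrite survS.
case: (eqVneq j s') => [ejs|njs].
  by apply: le_lt_trans (taboo_avg_le i (surv_le1 t)) _; rewrite -ejs gtrBl.
case: hj => [/eqP|hj]; first by rewrite (negbTE njs).
apply: lt_le_trans (taboo_avg_lt (surv_le1 t) pij njs hj) _.
by rewrite gerBl stochastic_ge0.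
Qed.

Lemma path_surv_lt1 p i :
  path (acc P) i p -> last i p = s' -> p != [::] -> exists k, surv P s' k i < 1.
Proof.
elim: p i => // j p IH i /= /andP [pij pth] hl _.
case: (eqVneq p [::]) => [p0|pn0].
  by exists 1%N; apply: surv_lt1_step pij _; left; move: hl; rewrite p0.
have [k hk] := IH j pth hl pn0.
by exists k.+1; apply: surv_lt1_step pij _; right.
Qed.

Lemma hit_psumS N i :
  hit_psum N.+1 i = 1 + \sum_(j | j != s') P i j * hit_psum N j.
Proof.
rewrite /hit_psum big_nat_recl //=; congr (_ + _).
under [RHS]eq_bigr do rewrite big_distrr /=.
by rewrite exchange_big.
Qed.

Lemma hit_psum_ge0 N i : 0 <= hit_psum N i.
Proof. by apply: sumr_ge0 => t _; exact: surv_ge0. Qed.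

Lemma hit_psum_nondecreasing N M i : (N <= M)%N -> hit_psum N i <= hit_psum M i.
Proof.
move=> NM; rewrite /hit_psum (@big_cat_nat _ _ _ N 0 M) //= lerDl.
by apply: sumr_ge0 => t _; exact: surv_ge0.
Qed.

Lemma hit_psum_le N i : hit_psum N i <= N%:R.
Proof.
apply: le_trans (_ : \sum_(0 <= t < N) (1 : R) <= _).
  by apply: ler_sum => t _; exact: surv_le1.
by rewrite sumr_const_nat subn0.
Qed.

Lemma hit_psum_ge_surv N i : N.+1%:R * surv P s' N i <= hit_psum N.+1 i.
Proof.
apply: le_trans (_ : \sum_(0 <= t < N.+1) surv P s' N i <= _).
  by rewrite sumr_const_nat subn0 mulr_natl.
by apply: ler_sum_nat => t /andP [_ tN]; rewrite surv_nonincreasing.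
Qed.

Lemma exists_surv_le (C delta : R) : 0 < delta ->
  (forall N i, hit_psum N i <= C) -> exists M, forall i, surv P s' M i <= delta.
Proof.
move=> d0 hC.
have [M hM] : exists M : nat, C / delta <= M%:R.
  case: (lerP 0 (C / delta)) => h; last by exists 0%N; rewrite ltW.
  by exists (Num.bound (C / delta)); apply/ltW/archi_boundP.
exists M => i.
have hM' : C <= delta * M.+1%:R.
  by rewrite mulrC -ler_pdivrMr // (le_trans hM) // ler_nat.
rewrite -(ler_pM2l (ltr0Sn _ M)) [_ * delta]mulrC.
exact: le_trans (hit_psum_ge_surv M i) (le_trans (hC M.+1 i) hM').
Qed.

Lemma hit_psum_bound_ge1 (D : R) : (forall N i, hit_psum N i <= D) -> 1 <= D.
Proof. by move/(_ 1%N s'); rewrite /hit_psum big_nat1. Qed.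

Lemma hit_psum_le_supersolution (v : 'I_n -> R) : (forall i, 0 <= v i) ->
  (forall i, 1 + \sum_(j | j != s') P i j * v j <= v i) ->
  forall N i, hit_psum N i <= v i.
Proof.
move=> v0 hv; elim=> [|N IH] i; first by rewrite /hit_psum big_geq.
rewrite hit_psumS; apply: le_trans (hv i); rewrite lerD2l.
by apply: ler_sum => j _; rewrite ler_wpM2l ?stochastic_ge0.
Qed.

(* Unrolling the equation N times leaves a remainder weighted by surv N. *)
Lemma taboo_solution_bound (C F : R) (u f : 'I_n -> R) :
  (forall N i, hit_psum N i <= C) ->
  (forall i, u i = f i + \sum_(j | j != s') P i j * u j) ->
  (forall i, `|f i| <= F) -> forall i, `|u i| <= 2 * F * C.
Proof.
move=> hC hu hf.
have [im Him] := exists_argmax s' (fun j => `|u j|).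
set U := `|u im| in Him.
have unroll N i : `|u i| <= F * hit_psum N i + U * surv P s' N i.
  elim: N i => [|N IH] i.
    by rewrite /hit_psum big_geq //= mulr0 add0r mulr1.
  rewrite hu hit_psumS survS; apply: le_trans (ler_normD _ _) _.
  have h2 : `|\sum_(j | j != s') P i j * u j| <=
      \sum_(j | j != s') P i j * (F * hit_psum N j + U * surv P s' N j).
    apply: le_trans (ler_norm_sum _ _ _) _; apply: ler_sum => j _.
    by rewrite normrM ger0_norm ?stochastic_ge0 // ler_wpM2l ?stochastic_ge0.
  have h3 : \sum_(j | j != s') P i j * (F * hit_psum N j + U * surv P s' N j) =
      F * \sum_(j | j != s') P i j * hit_psum N j +
      U * \sum_(j | j != s') P i j * surv P s' N j.
    by rewrite !mulr_sumr -big_split /=; apply: eq_bigr => j _; ring.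
  by have := hf i; move: h2; rewrite h3; lra.
have half : (0 : R) < 2^-1 by rewrite invr_gt0.
have [M hM] := exists_surv_le half hC.
have F0 : 0 <= F := le_trans (normr_ge0 _) (hf s').
have U0 : 0 <= U := normr_ge0 _.
move=> i; apply: le_trans (Him i) _.
have := unroll M im; have := hC M im; have := hM im; rewrite -/U; nra.
Qed.

Hypothesis reach : forall i, connect (acc P) i s'.

Lemma exists_surv_lt1 i : exists k, surv P s' k i < 1.
Proof.
have [j pij] := stochastic_row_pos sP i.
have /connectP [p pth hl] := reach j.
by apply: (@path_surv_lt1 (j :: p)) => //=; rewrite pth andbT.
Qed.

(* After K steps every state has escaped s' with probability at least
   1 - rho > 0, so surv decays geometrically. *)
Lemma hit_psum_bounded : exists C, forall N i, hit_psum N i <= C.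
Proof.
have [f hf] := fin_all_exists exists_surv_lt1.
pose K := (\max_i f i)%N.
have [imax Hmax] := exists_argmax s' (surv P s' K).
pose rho := surv P s' K imax.
have rho1 : rho < 1 := le_lt_trans (surv_nonincreasing _ (leq_bigmax imax)) (hf imax).
have decay t i : surv P s' (t + K) i <= rho * surv P s' t i.
  elim: t i => [|t IH] i; first by rewrite add0n mulr1.
  rewrite addSn !survS mulr_sumr; apply: ler_sum => j _.
  by rewrite mulrCA ler_wpM2l ?stochastic_ge0.
exists (K%:R / (1 - rho)) => N i.
have split_K : hit_psum (N + K) i =
    hit_psum K i + \sum_(0 <= t < N) surv P s' (t + K) i.
  rewrite /hit_psum (@big_cat_nat _ _ _ K) //= ?leq_addl //; congr (_ + _).
  by rewrite -{1}[K]add0n big_addn addnK.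
have h1 : hit_psum N i <= hit_psum (N + K) i by rewrite hit_psum_nondecreasing ?leq_addr.
have h2 : \sum_(0 <= t < N) surv P s' (t + K) i <= rho * hit_psum N i.
  by rewrite /hit_psum mulr_sumr; apply: ler_sum => t _.
have h3 := hit_psum_le K i.
rewrite ler_pdivlMr ?subr_gt0 //; move: h1 h2 h3; rewrite split_K; nra.
Qed.

Lemma hit_psum_le_expected_hit N i : hit_psum N i <= expected_hit P i s'.
Proof.
have [C hC] := hit_psum_bounded.
have nd : nondecreasing_seq (hit_psum ^~ i) by move=> a b; exact: hit_psum_nondecreasing.
have ub : has_ubound (range (hit_psum ^~ i)) by exists C => _ [M _ <-]; exact: hC.
exact: nondecreasing_cvgn_le nd (nondecreasing_is_cvgn nd ub) N.
Qed.

End HittingTimes.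

Section Perturbation.
Variables (R : realType) (n : nat) (P Ph : 'M[R]_n) (s' : 'I_n) (D eps : R).
Hypotheses (sP : stochastic P) (sPh : stochastic Ph).
Hypothesis hD : forall N i, hit_psum P s' N i <= D.
Hypothesis he : forall i, \sum_j `|Ph i j - P i j| <= eps.
Hypothesis eD : eps * D <= 1.

Lemma perturbation_row_sum0 i : \sum_j (Ph i j - P i j) = 0.
Proof. by case: sP => _ a; case: sPh => _ b; rewrite sumrB a b subrr. Qed.

(* v = 3 hit_psum P s' M with surv P s' M <= 1/6 is a supersolution for Ph. *)
Lemma perturbed_hit_psum_le N i : hit_psum Ph s' N i <= 3 * D.
Proof.
have sixth : (0 : R) < 6^-1 by rewrite invr_gt0.
have [M hM] := exists_surv_le sP sixth hD.
pose v j := 3 * hit_psum P s' M j.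
have D1 := hit_psum_bound_ge1 hD.
have v_ge0 j : 0 <= v j by rewrite mulr_ge0 ?hit_psum_ge0.
suff super j : 1 + \sum_(k | k != s') Ph j k * v k <= v j.
  apply: le_trans (hit_psum_le_supersolution sPh v_ge0 super N i) _.
  by rewrite ler_pM2l ?hD.
have eA : hit_psum P s' M.+1 j = hit_psum P s' M j + surv P s' M j.
  by rewrite /hit_psum big_nat_recr.
have split_v : \sum_(k | k != s') Ph j k * v k = \sum_(k | k != s') P j k * v k +
    \sum_k (Ph j k - P j k) * (if k == s' then 0 else v k).
  rewrite [X in _ = _ + X](bigD1 s') //= eqxx mulr0 add0r -big_split /=.
  by apply: eq_bigr => k ks; rewrite (negbTE ks); ring.
have hv : \sum_(k | k != s') P j k * v k = 3 * (hit_psum P s' M.+1 j - 1).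
  rewrite hit_psumS (addrC 1) addrK mulr_sumr.
  by apply: eq_bigr => k _; rewrite /v; ring.
have hb : \sum_k (Ph j k - P j k) * (if k == s' then 0 else v k) <= eps * (3 * D) / 2.
  apply: sum_zero_mul_le; rewrite ?perturbation_row_sum0 ?he //; first lra.
  move=> k; case: (k == s'); first by rewrite lexx /=; lra.
  by rewrite /v; have := hit_psum_ge0 s' sP M k; have := hD M k; lra.
have := hM j; rewrite split_v hv eA /v.
by move: hb eD; set X := \sum_k _; lra.
Qed.

Lemma bias_perturbation (g gh : R) (b bh r : 'I_n -> R) (B : R) :
  0 <= B -> (forall j, `|b j - b s'| <= B) ->
  (forall i, g + b i = r i + \sum_j P i j * b j) ->
  (forall i, gh + bh i = r i + \sum_j Ph i j * bh j) ->
  forall j, `|(bh j - bh s') - (b j - b s')| <= 12 * eps * B * D.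
Proof.
move=> B0 hB hb hbh j.
pose d i := bh i - b i.
pose e i := \sum_k (Ph i k - P i k) * (b k - b s').
have he' i : `|e i| <= eps * B := norm_sum_mul_le B0 (he i) hB.
have hd i : (gh - g) + d i = \sum_k Ph i k * d k + e i.
  have -> : e i = \sum_k Ph i k * b k - \sum_k P i k * b k.
    rewrite /e; under eq_bigr do rewrite mulrBr.
    rewrite sumrB -mulr_suml perturbation_row_sum0 mul0r subr0.
    by under eq_bigr do rewrite mulrBl; rewrite sumrB.
  rewrite /d; under eq_bigr do rewrite mulrBr.
  by rewrite sumrB; have := hb i; have := hbh i; lra.
have dg : `|gh - g| <= eps * B := poisson_gain_bound sPh s' hd he'.
pose u i := d i - d s'.
have hu i : u i = (e i - (gh - g)) + \sum_(k | k != s') Ph i k * u k.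
  have -> : \sum_(k | k != s') Ph i k * u k = \sum_k Ph i k * u k.
    by rewrite [RHS](bigD1 s') //= /u subrr mulr0 add0r.
  rewrite /u; under eq_bigr do rewrite mulrBr.
  by rewrite sumrB (stochastic_mulr_sum_const sPh); have := hd i; lra.
have hf i : `|e i - (gh - g)| <= 2 * eps * B.
  by apply: le_trans (ler_normB _ _) _; have := he' i; lra.
have := taboo_solution_bound sPh perturbed_hit_psum_le hu hf j.
have -> : (bh j - bh s') - (b j - b s') = u j by rewrite /u /d; ring.
by have -> : 12 * eps * B * D = 2 * (2 * eps * B) * (3 * D) by ring.
Qed.

End Perturbation.

Section Advantage.
Variables (R : realType) (n : nat).

Lemma stochastic_Ppol (P0 P1 : 'M[R]_n) pi :
  stochastic P0 -> stochastic P1 -> stochastic (Ppol P0 P1 pi).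
Proof.
move=> [a0 b0] [a1 b1]; split=> [i j|i]; rewrite /Ppol.
  by rewrite mxE; case: ifP.
by under eq_bigr do rewrite mxE; case: (i \in pi).
Qed.

Lemma mnorm_ge0 (A : 'M[R]_n) : 0 <= mnorm A.
Proof.
rewrite /mnorm; elim/big_ind: _ => // [x y hx _|i _]; first by rewrite le_max hx.
exact: sumr_ge0.
Qed.

Lemma model_dist_ge0 (P0 P1 P0h P1h : 'M[R]_n) : 0 <= model_dist P0 P1 P0h P1h.
Proof. by rewrite le_max mnorm_ge0. Qed.

Lemma row_dist_le_mnorm (A B : 'M[R]_n) i :
  \sum_j `|B i j - A i j| <= mnorm (A - B).
Proof.
apply: le_trans (le_bigmax _ (fun i => \sum_j `|(A - B) i j|) i).
by apply: ler_sum => j _; rewrite !mxE distrC.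
Qed.

Lemma row_dist0_le (P0 P1 P0h P1h : 'M[R]_n) i :
  \sum_j `|P0h i j - P0 i j| <= model_dist P0 P1 P0h P1h.
Proof. by apply: le_trans (row_dist_le_mnorm _ _ i) _; rewrite le_max lexx. Qed.

Lemma row_dist1_le (P0 P1 P0h P1h : 'M[R]_n) i :
  \sum_j `|P1h i j - P1 i j| <= model_dist P0 P1 P0h P1h.
Proof. by apply: le_trans (row_dist_le_mnorm _ _ i) _; rewrite le_max lexx orbT. Qed.

Lemma row_dist_Ppol_le (P0 P1 P0h P1h : 'M[R]_n) pi i :
  \sum_j `|Ppol P0h P1h pi i j - Ppol P0 P1 pi i j| <= model_dist P0 P1 P0h P1h.
Proof.
under eq_bigr do rewrite !mxE.
by case: (i \in pi); [exact: row_dist1_le | exact: row_dist0_le].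
Qed.

Lemma advantage_recentre (P0 P1 : 'M[R]_n) r0 r1 (b : 'I_n -> R) s s' :
  stochastic P0 -> stochastic P1 ->
  advantage P0 P1 r0 r1 b s = r1 s - r0 s + \sum_j (P1 s j - P0 s j) * (b j - b s').
Proof.
move=> [_ h0] [_ h1]; rewrite /advantage; congr (_ + _).
under [RHS]eq_bigr do rewrite mulrBr.
by rewrite sumrB -mulr_suml sumrB h0 h1 subrr mul0r subr0.
Qed.

Lemma advantage_diff_le (P0 P1 P0h P1h : 'M[R]_n) r0 r1 (b bh : 'I_n -> R) s s' eps B U :
  stochastic P0 -> stochastic P1 -> stochastic P0h -> stochastic P1h ->
  \sum_j `|P0h s j - P0 s j| <= eps -> \sum_j `|P1h s j - P1 s j| <= eps ->
  0 <= B -> 0 <= U -> (forall j, `|b j - b s'| <= B) ->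
  (forall j, `|(bh j - bh s') - (b j - b s')| <= U) ->
  `|advantage P0 P1 r0 r1 b s - advantage P0h P1h r0 r1 bh s| <= 2 * eps * B + 2 * U.
Proof.
move=> s0 s1 s0h s1h e0 e1 B0 U0 hB hU.
rewrite (advantage_recentre r0 r1 b s s' s0 s1).
rewrite (advantage_recentre r0 r1 bh s s' s0h s1h).
pose x j := b j - b s'; pose y j := bh j - bh s'.
have -> : r1 s - r0 s + \sum_j (P1 s j - P0 s j) * x j -
    (r1 s - r0 s + \sum_j (P1h s j - P0h s j) * y j) =
    \sum_j ((P1 s j - P0 s j) - (P1h s j - P0h s j)) * x j +
    \sum_j (P1h s j - P0h s j) * (x j - y j).
  rewrite -big_split opprD addrACA subrr add0r -sumrB.
  by apply: eq_bigr => j _ /=; ring.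
apply: le_trans (ler_normD _ _) _; apply: lerD.
  apply: norm_sum_mul_le => //.
  apply: le_trans (_ : \sum_j (`|P1h s j - P1 s j| + `|P0h s j - P0 s j|) <= _).
    apply: ler_sum => j _; rewrite -normrN.
    have -> : - (P1 s j - P0 s j - (P1h s j - P0h s j)) =
      (P1h s j - P1 s j) - (P0h s j - P0 s j) by ring.
    exact: ler_normB.
  by rewrite big_split /=; lra.
apply: norm_sum_mul_le => [//||j]; last by rewrite distrC; exact: hU.
apply: le_trans (_ : \sum_j (P1h s j + P0h s j) <= _).
  apply: ler_sum => j _; apply: le_trans (ler_normB _ _) _.
  by rewrite !ger0_norm ?stochastic_ge0.
by case: s0h => _ a; case: s1h => _ c; rewrite big_split /= a c.
Qed.

End Advantage.

Section PolicyBound.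
Variables (R : realType) (n : nat) (P0 P1 : 'M[R]_n) (r0 r1 : 'I_n -> R).
Hypotheses (s0 : stochastic P0) (s1 : stochastic P1) (uni : mdp_unichain P0 P1).
Variable pi : {set 'I_n}.

Lemma hit_psum_le_max_diameter s' : recurrent (Ppol P0 P1 pi) s' ->
  forall N i, hit_psum (Ppol P0 P1 pi) s' N i <= max_diameter P0 P1.
Proof.
move=> rs N i; have sP := stochastic_Ppol pi s0 s1.
have reach := unichain_connect_recurrent (@uni pi) rs.
apply: le_trans (hit_psum_le_expected_hit sP reach N i) _.
rewrite /max_diameter /diameter.
apply: le_trans (le_bigmax _ _ pi); apply: le_trans (le_bigmax _ _ i).
exact: (le_bigmax_cond _ _ rs).
Qed.

Lemma bias_span_bounded s' : exists2 B, 0 <= B &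
  forall g b, gain_bias P0 P1 r0 r1 pi g b -> forall j, `|b j - b s'| <= B.
Proof.
case: (pselect (exists g b, gain_bias P0 P1 r0 r1 pi g b)) => [[g0 [b0 h0]]|nosol].
  exists (\sum_j `|b0 j - b0 s'|); first exact: sumr_ge0.
  move=> g b h j.
  have sP := stochastic_Ppol pi s0 s1.
  have -> : b j - b s' = b0 j - b0 s'.
    by have := poisson_bias_unique sP (@uni pi) h h0 j s'; lra.
  by rewrite (bigD1 j) //= lerDl sumr_ge0.
by exists 0 => // g b h; exfalso; apply: nosol; exists g, b.
Qed.

Lemma advantage_lipschitz_policy : exists c, 0 <= c /\
  forall P0h P1h : 'M[R]_n, stochastic P0h -> stochastic P1h ->
    model_dist P0 P1 P0h P1h <= 1 / max_diameter P0 P1 ->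
    forall s g b gh bh, gain_bias P0 P1 r0 r1 pi g b ->
      gain_bias P0h P1h r0 r1 pi gh bh ->
      `|advantage P0 P1 r0 r1 b s - advantage P0h P1h r0 r1 bh s|
        <= c * model_dist P0 P1 P0h P1h.
Proof.
have [i0 _|n0] := pickP (@predT 'I_n); last first.
  by exists 0; split=> // P0h P1h _ _ _ s; have := n0 s.
have sP := stochastic_Ppol pi s0 s1.
have [s' rs _] := exists_recurrent_connect (Ppol P0 P1 pi) i0.
have [B B0 hB] := bias_span_bounded s'.
have hD := hit_psum_le_max_diameter rs.
set D := max_diameter P0 P1 in hD *.
have D1 := hit_psum_bound_ge1 hD.
exists (2 * B + 24 * B * D); split; first by rewrite addr_ge0 ?mulr_ge0 //; lra.
move=> P0h P1h s0h s1h hA s g b gh bh hgb hgbh.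
set eps := model_dist P0 P1 P0h P1h in hA *.
have eD : eps * D <= 1 by move: hA; rewrite ler_pdivlMr ?mul1r //; lra.
have hU := bias_perturbation sP (stochastic_Ppol pi s0h s1h) hD
  (row_dist_Ppol_le P0 P1 P0h P1h pi) eD B0 (hB _ _ hgb) hgb hgbh.
rewrite -/eps in hU.
have U0 : 0 <= 12 * eps * B * D by rewrite !mulr_ge0 ?model_dist_ge0 //; lra.
have -> : (2 * B + 24 * B * D) * eps = 2 * eps * B + 2 * (12 * eps * B * D) by ring.
apply: (advantage_diff_le (s' := s') r0 r1 s0 s1 s0h s1h) => //.
- exact: row_dist0_le.
- exact: row_dist1_le.
- exact: hB _ _ hgb.
Qed.

End PolicyBound.

Unset Implicit Arguments.

Theorem mainTheorem5 (R : realType) (n : nat) (P0 P1 : 'M[R]_n)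
  (r0 r1 : 'I_n -> R) (lam : 'I_n -> R) :
  stochastic P0 -> stochastic P1 -> mdp_unichain P0 P1 ->
  (forall s, whittle_index P0 P1 r0 r1 s (lam s)) ->
  exists c : R, 0 < c /\
    forall P0h P1h : 'M[R]_n,
      stochastic P0h -> stochastic P1h ->
      same_support P0 P0h -> same_support P1 P1h ->
      assumptionA P0 P1 P0h P1h lam ->
      forall (pi : {set 'I_n}) (s : 'I_n) (g : R) (b : 'I_n -> R)
             (gh : R) (bh : 'I_n -> R),
        gain_bias P0 P1 r0 r1 pi g b ->
        gain_bias P0h P1h r0 r1 pi gh bh ->
        `|advantage P0 P1 r0 r1 b s - advantage P0h P1h r0 r1 bh s|
          <= c * model_dist P0 P1 P0h P1h.
Proof.
move=> s0 s1 uni _.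
have [c hc] := fin_all_exists (advantage_lipschitz_policy r0 r1 s0 s1 uni).
have c_ge0 pi : 0 <= c pi by case: (hc pi).
have c_le pi : c pi <= 1 + \sum_pi' c pi'.
  rewrite (bigD1 pi) //= addrCA lerDl addr_ge0 //.
  by apply: sumr_ge0 => pi' _.
exists (1 + \sum_pi c pi); split; first by rewrite ltr_pwDl ?sumr_ge0.
move=> P0h P1h s0h s1h _ _ [hA _] pi s g b gh bh hgb hgbh.
apply: le_trans ((hc pi).2 P0h P1h s0h s1h hA s g b gh bh hgb hgbh) _.
by rewrite ler_wpM2r ?model_dist_ge0.
Qed.
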